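(* Let $\kappa$ be any cardinal. The functors $N:\mathbf{MKF}_\kappa\to\mathbf{NFR}_\kappa$ and $H:\mathbf{NFR}_\kappa\to\mathbf{MKF}_\kappa$ form an equivalence of categories: for every $\kappa$-downward directed multi-relational Kripke frame $M=\langle W,S\rangle$, the identity map on $W$ is an isomorphism of multi-relational Kripke frames $M\to H(N(M))$, and for every $\kappa$-complete neighborhood frame $Z=\langle C,\nu\rangle$, the identity map on $C$ is an isomorphism of neighborhood frames $Z\to N(H(Z))$ (these identities being natural).
   Context: For a binary relation $R$ on $W$ and $x\in W$, $R[x]=\{y\in W\mid xRy\}$. A multi-relational Kripke frame is a pair $\langle W,S\rangle$ where $W$ is a non-empty set and $S$ is a non-empty set of binary relations on $W$. For a cardinal $\kappa$, it is $\kappa$-downward directed if for every $S'\subseteq S$ with $|S'|<\kappa$ there is $R\in S$ with $R\subseteq\bigcap S'$ (with $\bigcap\emptyset=W\times W$). A homomorphism of multi-relational Kripke frames $f:\langle W_1,S_1\rangle\to\langle W_2,S_2\rangle$ is a map $f:W_1\to W_2$ such that: (i) for every $x\in W_1$ and $R_2\in S_2$ there is $R_1\in S_1$ such that for all $y\in W_1$, $xR_1y$ implies $f(x)R_2f(y)$; (ii) for every $x\in W_1$ and $R_1\in S_1$ there is $R_2\in S_2$ such that for all $u\in W_2$, if $f(x)R_2u$ then there exists $y\in W_1$ with $xR_1y$ and $f(y)=u$. An isomorphism is a bijective homomorphism. $\mathbf{MKF}_\kappa$ is the category of $\kappa$-downward directed multi-relational Kripke frames with these homomorphisms. A neighborhood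 frame is a pair $\langle C,\nu\rangle$ with $C$ non-empty and $\nu:C\to\mathcal P(\mathcal P(C))$. It is $\kappa$-complete if $C\in\nu(c)$ for all $c$, $\nu(c)$ is upward closed under $\subseteq$ for all $c$, and $\bigcap S'\in\nu(c)$ for every $c\in C$ and every non-empty $S'\subseteq\nu(c)$ with $|S'|<\kappa$. A homomorphism of neighborhood frames $f:\langle C_1,\nu_1\rangle\to\langle C_2,\nu_2\rangle$ is a map $f:C_1\to C_2$ such that for all $c\in C_1$, $X\subseteq C_2$: $f^{-1}[X]\in\nu_1(c)\iff X\in\nu_2(f(c))$. $\mathbf{NFR}_\kappa$ is the category of $\kappa$-complete neighborhood frames with these homomorphisms. $N(\langle W,S\rangle)=\langle W,\nu_M\rangle$ with $\nu_M(x)=\{Y\subseteq W\mid R[x]\subseteq Y\text{ for some }R\in S\}$, and $N(f)=f$. $H(\langle C,\nu\rangle)=\langle C,\{R_v\mid v\in V_Z\}\rangle$ where $V_Z$ is the set of maps $v:C\to\mathcal P(C)$ with $v(x)\in\nu(x)$ for all $x$ and $R_v=\{(x,y)\mid y\in v(x)\}$; $H(f)=f$. *)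

(* A cardinal kappa is represented by a type K of cardinality kappa.
   |A| < |K|  :=  there is an injection A -> K but no injection K -> A. *)
Definition injective_fun {A B : Type} (f : A -> B) : Prop :=
  forall a b, f a = f b -> a = b.

Definition card_lt (A K : Type) : Prop :=
  (exists f : A -> K, injective_fun f) /\ ~ (exists g : K -> A, injective_fun g).

Definition bij {A B : Type} (f : A -> B) : Prop :=
  injective_fun f /\ forall b, exists a, f a = b.

Definition Rel (W : Type) := W -> W -> Prop.

(* kappa-downward directed: for every S' subset of S with |S'| < kappa there is
   R in S with R included in the intersection of S' (empty intersection = W x W). *)
Definition down_directed (K : Type) {W : Type} (S : Rel W -> Prop) : Prop :=
  forall S' : Rel W -> Prop,
    (forall R, S' R -> S R) ->
    card_lt {R : Rel W | S' R} K ->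
    exists R, S R /\ forall x y, R x y -> forall R', S' R' -> R' x y.

Definition MKF (K : Type) (W : Type) (S : Rel W -> Prop) : Prop :=
  inhabited W /\ (exists R, S R) /\ down_directed K S.

Definition hom_MKF {W1 W2 : Type} (S1 : Rel W1 -> Prop) (S2 : Rel W2 -> Prop)
  (f : W1 -> W2) : Prop :=
  (forall x R2, S2 R2 -> exists R1, S1 R1 /\ forall y, R1 x y -> R2 (f x) (f y)) /\
  (forall x R1, S1 R1 -> exists R2, S2 R2 /\
      forall u, R2 (f x) u -> exists y, R1 x y /\ f y = u).

Definition iso_MKF {W1 W2 : Type} (S1 : Rel W1 -> Prop) (S2 : Rel W2 -> Prop)
  (f : W1 -> W2) : Prop := hom_MKF S1 S2 f /\ bij f.

Definition NFR (K : Type) (C : Type) (nu : C -> (C -> Prop) -> Prop) : Prop :=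
  inhabited C /\
  (forall c, nu c (fun _ => True)) /\
  (forall c (X Y : C -> Prop), nu c X -> (forall z, X z -> Y z) -> nu c Y) /\
  (forall c (S' : (C -> Prop) -> Prop),
      (forall X, S' X -> nu c X) -> (exists X, S' X) ->
      card_lt {X : C -> Prop | S' X} K ->
      nu c (fun z => forall X, S' X -> X z)).

Definition hom_NFR {C1 C2 : Type} (nu1 : C1 -> (C1 -> Prop) -> Prop)
  (nu2 : C2 -> (C2 -> Prop) -> Prop) (f : C1 -> C2) : Prop :=
  forall c (X : C2 -> Prop), nu1 c (fun z => X (f z)) <-> nu2 (f c) X.

Definition iso_NFR {C1 C2 : Type} (nu1 : C1 -> (C1 -> Prop) -> Prop)
  (nu2 : C2 -> (C2 -> Prop) -> Prop) (f : C1 -> C2) : Prop :=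
  hom_NFR nu1 nu2 f /\ bij f.

Definition N_nu {W : Type} (S : Rel W -> Prop) : W -> (W -> Prop) -> Prop :=
  fun x Y => exists R, S R /\ forall y, R x y -> Y y.

Definition H_S {C : Type} (nu : C -> (C -> Prop) -> Prop) : Rel C -> Prop :=
  fun R => exists v : C -> C -> Prop, (forall x, nu x (v x)) /\ R = (fun x y => v x y).

From Stdlib Require Import Classical ClassicalEpsilon.

(* Using upward closure and the top set, any neighbourhood X of c is
   R[c] for the relation that is X at c and the whole space elsewhere; this
   recovers nu from N(H(nu)). Conversely every R in S lies in H(N(S)), and each
   member of H(N(S)) contains, pointwise, some R[x] with R in S. The
   kappa-conditions transfer because an image of a family of size < kappa
   again has size < kappa. *)

Lemma card_lt_surj (A B K : Type) (p : A -> B) :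
  (forall b, exists a, p a = b) -> card_lt A K -> card_lt B K.
Proof.
  intros Hp [[f Hf] Hno].
  assert (Hsec : exists s : B -> A, forall b, p (s b) = b).
  { exists (fun b => proj1_sig (constructive_indefinite_description _ (Hp b))).
    intro b. exact (proj2_sig (constructive_indefinite_description _ (Hp b))). }
  destruct Hsec as [s Hs].
  assert (Hs_inj : injective_fun s).
  { intros a b Hab. rewrite <- (Hs a), <- (Hs b), Hab. reflexivity. }
  split.
  - exists (fun b => f (s b)). intros a b Hab. apply Hs_inj, Hf, Hab.
  - intros [g Hg]. apply Hno. exists (fun k => s (g k)).
    intros a b Hab. apply Hg, Hs_inj, Hab.
Qed.

Lemma card_lt_image (A B K : Type) (P : A -> Prop) (g : A -> B) :
  card_lt {a | P a} K -> card_lt {b | exists a, P a /\ b = g a} K.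
Proof.
  apply card_lt_surj with
    (p := fun a => exist _ (g (proj1_sig a)) (ex_intro _ _ (conj (proj2_sig a) eq_refl))).
  intros [b [a [Ha ->]]]. exists (exist _ a Ha). reflexivity.
Qed.

Lemma bij_id (A : Type) : bij (fun x : A => x).
Proof. split; [intros a b Hab; exact Hab | intro b; exists b; reflexivity]. Qed.

Section NeighbourhoodFrames.

Variables (C : Type) (nu : C -> (C -> Prop) -> Prop).

Definition nbhd_top : Prop := forall c, nu c (fun _ => True).

Definition nbhd_upward : Prop :=
  forall c (X Y : C -> Prop), nu c X -> (forall z, X z -> Y z) -> nu c Y.

Definition nbhd_small_meet (K : Type) : Prop :=
  forall c (S' : (C -> Prop) -> Prop),
    (forall X, S' X -> nu c X) -> (exists X, S' X) ->
    card_lt {X : C -> Prop | S' X} K ->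
    nu c (fun z => forall X, S' X -> X z).

Lemma NFR_nbhd (K : Type) :
  NFR K C nu -> nbhd_top /\ nbhd_upward /\ nbhd_small_meet K.
Proof. intros [_ Hnu]. exact Hnu. Qed.

Lemma H_S_iff (R : Rel C) : H_S nu R <-> forall x, nu x (R x).
Proof.
  split.
  - intros [v [Hv ->]]. exact Hv.
  - intro HR. exists R. split; [exact HR | reflexivity].
Qed.

Definition rel_at (c : C) (X : C -> Prop) : Rel C := fun z y => z = c -> X y.

Hypotheses (Htop : nbhd_top) (Hup : nbhd_upward).

Lemma H_S_rel_at (c : C) (X : C -> Prop) : nu c X -> H_S nu (rel_at c X).
Proof.
  intro HX. apply H_S_iff. intro z. unfold rel_at.
  destruct (classic (z = c)) as [-> | Hzc].
  - apply (Hup _ _ _ HX). intros y Hy _. exact Hy.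
  - apply (Hup _ _ _ (Htop z)). intros y _ Hz. contradiction.
Qed.

Lemma N_nu_H_S (c : C) (X : C -> Prop) : N_nu (H_S nu) c X <-> nu c X.
Proof.
  split.
  - intros [R [HR HRX]]. apply (Hup _ (R c)); [apply H_S_iff, HR | exact HRX].
  - intro HX. exists (rel_at c X). split; [apply H_S_rel_at, HX|].
    intros y Hy. apply Hy. reflexivity.
Qed.

Lemma nbhd_meet (K : Type) (c : C) (S' : (C -> Prop) -> Prop) :
  nbhd_small_meet K -> (forall X, S' X -> nu c X) ->
  card_lt {X | S' X} K -> nu c (fun z => forall X, S' X -> X z).
Proof.
  intros Hmeet HS' Hcard.
  destruct (classic (exists X, S' X)) as [Hne | Hempty].
  - exact (Hmeet c S' HS' Hne Hcard).
  - apply (Hup _ _ _ (Htop c)). intros z _ X HX. exfalso. apply Hempty. exists X. exact HX.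
Qed.

Lemma H_S_down_directed (K : Type) : nbhd_small_meet K -> down_directed K (H_S nu).
Proof.
  intros Hmeet S' HS' Hcard.
  exists (fun x y => forall R, S' R -> R x y). split; [| intros x y Hxy; exact Hxy].
  apply H_S_iff. intro x.
  apply (Hup _ (fun z => forall X, (exists R, S' R /\ X = R x) -> X z)).
  - apply (nbhd_meet K); [exact Hmeet | |].
    + intros X [R [HR ->]]. apply H_S_iff, HS', HR.
    + exact (card_lt_image _ _ _ _ (fun R : Rel C => R x) Hcard).
  - intros y Hy R HR. apply Hy. exists R. split; [exact HR | reflexivity].
Qed.

End NeighbourhoodFrames.

Lemma H_S_MKF (K C : Type) (nu : C -> (C -> Prop) -> Prop) :
  NFR K C nu -> MKF K C (H_S nu).
Proof.
  intros [Hinh [Htop [Hup Hmeet]]]. split; [exact Hinh | split].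
  - exists (fun _ _ => True). apply H_S_iff, Htop.
  - exact (H_S_down_directed C nu Htop Hup K Hmeet).
Qed.

Lemma hom_NFR_H (C1 C2 : Type) (nu1 : C1 -> (C1 -> Prop) -> Prop)
  (nu2 : C2 -> (C2 -> Prop) -> Prop) (f : C1 -> C2) :
  nbhd_upward C1 nu1 -> nbhd_top C2 nu2 -> nbhd_upward C2 nu2 ->
  hom_NFR nu1 nu2 f -> hom_MKF (H_S nu1) (H_S nu2) f.
Proof.
  intros Hup1 Htop2 Hup2 Hf. split.
  - intros x R2 HR2. exists (fun z y => R2 (f z) (f y)). split; [| intros y Hy; exact Hy].
    apply H_S_iff. intro z. apply Hf, (proj1 (H_S_iff C2 nu2 R2) HR2).
  - intros x R1 HR1.
    set (image := fun u => exists y, R1 x y /\ f y = u).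
    exists (rel_at C2 (f x) image). split.
    + apply H_S_rel_at; [exact Htop2 | exact Hup2 |].
      apply Hf. apply (Hup1 x (R1 x)); [apply (proj1 (H_S_iff C1 nu1 R1) HR1) |].
      intros y Hy. exists y. split; [exact Hy | reflexivity].
    + intros u Hu. exact (Hu eq_refl).
Qed.

Lemma iso_NFR_id_N_H (C : Type) (nu : C -> (C -> Prop) -> Prop) :
  nbhd_top C nu -> nbhd_upward C nu -> iso_NFR nu (N_nu (H_S nu)) (fun x : C => x).
Proof.
  intros Htop Hup. split; [| apply bij_id].
  intros c X. symmetry. exact (N_nu_H_S C nu Htop Hup c X).
Qed.

Section MultiRelationalFrames.

Variables (W : Type) (S : Rel W -> Prop).

Lemma N_nu_top : (exists R, S R) -> nbhd_top W (N_nu S).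
Proof. intros [R HR] c. exists R. split; [exact HR | trivial]. Qed.

Lemma N_nu_upward : nbhd_upward W (N_nu S).
Proof.
  intros c X Y [R [HR HRX]] HXY. exists R. split; [exact HR |].
  intros y Hy. apply HXY, HRX, Hy.
Qed.

Lemma N_nu_small_meet (K : Type) : down_directed K S -> nbhd_small_meet W (N_nu S) K.
Proof.
  intros Hdd c S' HS' _ Hcard.
  assert (Hwit : forall X, exists R, S' X -> S R /\ forall y, R c y -> X y).
  { intro X. destruct (classic (S' X)) as [HX | HX].
    - destruct (HS' X HX) as [R HR]. exists R. intros _. exact HR.
    - exists (fun _ _ => True). intro HX'. contradiction. }
  set (pick := fun X => proj1_sig (constructive_indefinite_description _ (Hwit X))).
  assert (Hpick : forall X, S' X -> S (pick X) /\ forall y, pick X c y -> X y).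
  { intro X. exact (proj2_sig (constructive_indefinite_description _ (Hwit X))). }
  destruct (Hdd (fun R => exists X, S' X /\ R = pick X)) as [R [HR HRsub]].
  - intros R [X [HX ->]]. apply Hpick, HX.
  - exact (card_lt_image _ _ _ _ pick Hcard).
  - exists R. split; [exact HR |]. intros y Hy X HX.
    apply (proj2 (Hpick X HX)), (HRsub c y Hy). exists X. split; [exact HX | reflexivity].
Qed.

Lemma N_nu_NFR (K : Type) : MKF K W S -> NFR K W (N_nu S).
Proof.
  intros [Hinh [Hne Hdd]]. split; [exact Hinh | split; [| split]].
  - exact (N_nu_top Hne).
  - exact N_nu_upward.
  - exact (N_nu_small_meet K Hdd).
Qed.

Lemma H_S_N_nu (R : Rel W) : S R -> H_S (N_nu S) R.
Proof.
  intro HR. apply H_S_iff. intro x. exists R. split; [exact HR | trivial].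
Qed.

Lemma iso_MKF_id_H_N : iso_MKF S (H_S (N_nu S)) (fun x : W => x).
Proof.
  split; [split | apply bij_id].
  - intros x R2 HR2. exact (proj1 (H_S_iff W (N_nu S) R2) HR2 x).
  - intros x R1 HR1. exists R1. split; [apply H_S_N_nu, HR1 |].
    intros u Hu. exists u. split; [exact Hu | reflexivity].
Qed.

End MultiRelationalFrames.

Lemma hom_MKF_N (W1 W2 : Type) (S1 : Rel W1 -> Prop) (S2 : Rel W2 -> Prop)
  (f : W1 -> W2) : hom_MKF S1 S2 f -> hom_NFR (N_nu S1) (N_nu S2) f.
Proof.
  intros [Hforth Hback] c X. split.
  - intros [R1 [HR1 HX]]. destruct (Hback c R1 HR1) as [R2 [HR2 Hlift]].
    exists R2. split; [exact HR2 |].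
    intros u Hu. destruct (Hlift u Hu) as [y [Hy <-]]. apply HX, Hy.
  - intros [R2 [HR2 HX]]. destruct (Hforth c R2 HR2) as [R1 [HR1 Hmap]].
    exists R1. split; [exact HR1 |]. intros y Hy. apply HX, Hmap, Hy.
Qed.

Theorem theorem6p4 : forall K : Type,
  (* N and H are well-defined functors (N(f) = f, H(f) = f) *)
  (forall (W : Type) (S : Rel W -> Prop), MKF K W S -> NFR K W (N_nu S)) /\
  (forall (C : Type) (nu : C -> (C -> Prop) -> Prop), NFR K C nu -> MKF K C (H_S nu)) /\
  (forall (W1 : Type) (S1 : Rel W1 -> Prop) (W2 : Type) (S2 : Rel W2 -> Prop)
          (f : W1 -> W2),
      MKF K W1 S1 -> MKF K W2 S2 -> hom_MKF S1 S2 f -> hom_NFR (N_nu S1) (N_nu S2) f) /\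
  (forall (C1 : Type) (nu1 : C1 -> (C1 -> Prop) -> Prop)
          (C2 : Type) (nu2 : C2 -> (C2 -> Prop) -> Prop) (f : C1 -> C2),
      NFR K C1 nu1 -> NFR K C2 nu2 -> hom_NFR nu1 nu2 f -> hom_MKF (H_S nu1) (H_S nu2) f) /\
  (* the identity is an isomorphism M -> H(N(M)) *)
  (forall (W : Type) (S : Rel W -> Prop),
      MKF K W S -> iso_MKF S (H_S (N_nu S)) (fun x : W => x)) /\
  (* the identity is an isomorphism Z -> N(H(Z)) *)
  (forall (C : Type) (nu : C -> (C -> Prop) -> Prop),
      NFR K C nu -> iso_NFR nu (N_nu (H_S nu)) (fun x : C => x)).
Proof.
  intro K. split; [| split; [| split; [| split; [| split]]]].
  - intros W S. apply N_nu_NFR.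
  - intros C nu. apply H_S_MKF.
  - intros W1 S1 W2 S2 f _ _. apply hom_MKF_N.
  - intros C1 nu1 C2 nu2 f HZ1 HZ2.
    destruct (NFR_nbhd C1 nu1 K HZ1) as [_ [Hup1 _]].
    destruct (NFR_nbhd C2 nu2 K HZ2) as [Htop2 [Hup2 _]].
    exact (hom_NFR_H C1 C2 nu1 nu2 f Hup1 Htop2 Hup2).
  - intros W S _. apply iso_MKF_id_H_N.
  - intros C nu HZ. destruct (NFR_nbhd C nu K HZ) as [Htop [Hup _]].
    exact (iso_NFR_id_N_H C nu Htop Hup).
Qed.
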